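(* Let $G$ be a subgroup of $S_n$, $\chi$ a character of $G$ and $\theta\in S_n$. Then $$d_\chi^G(P_\theta+P_{\theta^{-1}})=2^{F+2t}\,d_\chi^G(S_\theta),$$ where $F$ is the number of fixed points of $\theta$ and $t$ is the number of transpositions (2-cycles) in the disjoint cycles expression of $\theta$.
   Context: $d_\chi^G(A)=\sum_{\sigma\in G}\chi(\sigma)\prod_{i=1}^nA_{i\,\sigma(i)}$, where $\chi$ is the trace of a finite-dimensional complex representation of $G$. For $\theta\in S_n$, $(P_\theta)_{ij}=1$ if $\theta^{-1}(i)=j$ and $0$ otherwise. $S_\theta$ is the $n\times n$ symmetric $0/1$ matrix with $(S_\theta)_{ij}=1$ if $\theta(i)=j$ or $\theta^{-1}(i)=j$, and $0$ otherwise. *)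

From HB Require Import structures.
From mathcomp Require Import all_boot all_order all_algebra all_fingroup all_solvable all_field all_character.
Set Implicit Arguments. Unset Strict Implicit. Unset Printing Implicit Defensive.
Import Order.TTheory GRing.Theory Num.Theory.
Local Open Scope ring_scope.

Definition gmf n (G : {group 'S_n}) (chi : 'CF(G)) (A : 'M[algC]_n) : algC :=
  \sum_(s in G) chi s * \prod_(i < n) A i (s i).

Definition Pmx n (th : 'S_n) : 'M[algC]_n :=
  \matrix_(i, j) ((th^-1)%g i == j)%:R.

Definition Smx n (th : 'S_n) : 'M[algC]_n :=
  \matrix_(i, j) ((th i == j) || ((th^-1)%g i == j))%:R.

Definition nfix n (th : 'S_n) : nat := #|[set i | th i == i]|.

Definition ntransp n (th : 'S_n) : nat := #|[set C in porbits th | #|C| == 2]|.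

From HB Require Import structures.
From mathcomp Require Import all_boot all_order all_algebra all_fingroup all_solvable all_field all_character.
Import Order.TTheory GRing.Theory Num.Theory.
Local Open Scope ring_scope.

(* Entrywise, P_theta + P_theta^-1 agrees with S_theta except
   that row i is doubled exactly when theta^-1 i = theta i, i.e. when
   theta (theta i) = i: then both permutation matrices put their 1 in the
   same column.  The generalized matrix function d_chi^G is multilinear in
   the rows (each term of it takes one entry from every row), so scaling row
   i by c_i multiplies it by prod_i c_i; here that product is 2^m with m the
   number of points i such that theta^2 i = i.  Those points are the fixed
   points together with the points of the 2-cycles of theta, and the
   2-cycles, being disjoint orbits of size 2, contain 2 t points. *)

Section OrbitCounting.

Variables (T : finType) (s : {perm T}).

Lemma porbits_partition : partition (porbits s) [set: T].
Proof.
apply/and3P; split.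
- apply/eqP/setP => x; rewrite inE; apply/bigcupP.
  by exists (porbit s x); [apply: imset_f | apply: porbit_id].
- apply/trivIsetP => _ _ /imsetP[x _ ->] /imsetP[y _ ->] neq_xy.
  apply/pred0P => z /=; apply/negbTE/negP => /andP[zx zy].
  move: zx zy; rewrite -!eq_porbit_mem => /eqP zx /eqP zy.
  by rewrite -zx -zy eqxx in neq_xy.
- by apply/imsetP => -[x _ /setP/(_ x)]; rewrite porbit_id inE.
Qed.

Lemma card_points_in_cycles_of_size k :
  #|[set x | #|porbit s x| == k]| = (k * #|[set C in porbits s | #|C| == k]|)%N.
Proof.
set Q := [set C in porbits s | #|C| == k].
have sub_Q : Q \subset porbits s by apply/subsetP => C; rewrite inE => /andP[].
have part_Q : partition Q (cover Q).
  apply/and3P; split=> //.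
    exact: trivIsetS sub_Q (partition_trivIset porbits_partition).
  by apply: contraFN (partition0 porbits_partition); apply: (subsetP sub_Q).
have -> : [set x | #|porbit s x| == k] = cover Q.
  apply/setP => x; rewrite inE; apply/idP/bigcupP => [sz_x | [C]].
    by exists (porbit s x); rewrite ?porbit_id // inE sz_x andbT imset_f.
  rewrite inE => /andP[/imsetP[y _ ->] sz_y] x_y.
  by rewrite (eqP (_ : porbit s x == porbit s y)) // eq_porbit_mem.
rewrite mulnC (card_uniform_partition (n := k) _ part_Q) // => C.
by rewrite inE => /andP[_ /eqP].
Qed.

Lemma porbit_card2 x :
  (#|porbit s x| == 2)%N = (s x != x) && (s (s x) == x).
Proof.
have uniq_traj := uniq_traject_porbit s x.
have iter_x := iter_porbit s x.
apply/eqP/andP => [sz2 | [moved back]].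
  rewrite sz2 /= in uniq_traj iter_x; rewrite iter_x; split => //.
  by move: uniq_traj; rewrite /= inE andbT eq_sym.
have -> : porbit s x = [set x; s x].
  apply/setP => y; rewrite !inE; apply/porbitP/idP => [[i ->]|].
    elim: i => [|i IH]; first by rewrite expg0 perm1 eqxx.
    rewrite expgSr permM; case/orP: IH => /eqP ->; first by rewrite eqxx orbT.
    by rewrite (eqP back) eqxx.
  by case/orP => /eqP ->; [exists 0%N; rewrite expg0 perm1 | exists 1%N; rewrite expg1].
by rewrite cards2 eq_sym moved.
Qed.

Lemma card_involutive_points :
  #|[set x | s (s x) == x]| =
  (#|[set x | s x == x]| + 2 * #|[set C in porbits s | #|C| == 2%N]|)%N.
Proof.
rewrite -card_points_in_cycles_of_size.
rewrite -(cardID [set x | s x == x] [set x | s (s x) == x]); congr (_ + _)%N.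
  apply: eq_card => x; rewrite !inE.
  by case: (eqVneq (s x) x) => [fix_x|]; rewrite ?andbF // !fix_x eqxx.
by apply: eq_card => x; rewrite !inE porbit_card2 andbC.
Qed.

End OrbitCounting.

Lemma gmf_scale_rows n (G : {group 'S_n}) (chi : 'CF(G)) (c : 'I_n -> algC)
    (A : 'M[algC]_n) :
  gmf chi (\matrix_(i, j) (c i * A i j)) = (\prod_(i < n) c i) * gmf chi A.
Proof.
rewrite /gmf mulr_sumr; apply: eq_bigr => s _.
rewrite mulrCA; congr (_ * _).
by rewrite -big_split; apply: eq_bigr => i _; rewrite mxE.
Qed.

(* P_theta + P_theta^-1 is S_theta with every row i such that theta (theta i)
   = i doubled: there theta i = theta^-1 i, and otherwise the two 1s of
   row i sit in distinct columns. *)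
Lemma Pmx_sum_inv n (th : 'S_n) :
  Pmx th + Pmx (th^-1)%g =
  \matrix_(i, j) ((if th (th i) == i then 2 else 1) * Smx th i j).
Proof.
apply/matrixP => i j; rewrite !mxE invgK.
case: ifP => [/eqP inv_i | not_inv_i].
  have -> : (th^-1)%g i = th i by rewrite -{1}inv_i permK.
  by rewrite orbb; case: (th i == j); rewrite ?mulr1 ?mulr0 ?addr0.
rewrite mul1r; case: eqP => [inv_j|]; case: eqP => [th_j|] //=.
- by move: not_inv_i; rewrite -th_j in inv_j; rewrite -inv_j permKV eqxx.
- by rewrite addr0.
- by rewrite add0r.
- by rewrite addr0.
Qed.

Lemma prod_row_weights n (th : 'S_n) :
  \prod_(i < n) (if th (th i) == i then 2 else 1) =
  2 ^+ #|[set i | th (th i) == i]| :> algC.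
Proof. by rewrite -big_mkcond /= -prodr_const; apply: eq_bigl => i; rewrite inE. Qed.

Theorem mainTheorem10 (n : nat) (G : {group 'S_n}) (chi : 'CF(G))
  (Hchi : chi \is a character) (th : 'S_n) :
  gmf chi (Pmx th + Pmx (th^-1)%g) =
  2%:R ^+ (nfix th + 2 * ntransp th) * gmf chi (Smx th).
Proof.
by rewrite Pmx_sum_inv gmf_scale_rows prod_row_weights card_involutive_points.
Qed.
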